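(* Let $\{\tilde\alpha,\tilde\beta\}$ be a dual timelike - spacelike Mannheim pair in $ID_1^3$, and let $\Phi$ be the dual angle between the dual tangent vectors $T$ of $\tilde\alpha$ and $V_1$ of $\tilde\beta$, so that $V_1=\sinh\Phi\,T+\cosh\Phi\,N$ and $V_3=\cosh\Phi\,T+\sinh\Phi\,N$. Then the dual curvatures and torsions of $\tilde\alpha$ and $\tilde\beta$ satisfy (i) $\kappa=-\dfrac{d\Phi}{ds}$; (ii) $\tau=P\cosh\Phi\,\dfrac{ds^*}{ds}-Q\sinh\Phi\,\dfrac{ds^*}{ds}$; (iii) $P=\tau\cosh\Phi\,\dfrac{ds}{ds^*}$; (iv) $Q=\tau\sinh\Phi\,\dfrac{ds}{ds^*}$.
   Context: Dual numbers: $ID=\{a+\varepsilon a^*: a,a^*\in\mathbb R\}$ with $\varepsilon^2=0$; differentiable functions extend by $f(a+\varepsilon a^* )=f(a)+\varepsilon a^* f'(a)$, so e.g. $\sinh(\varphi+\varepsilon\varphi^* )=\sinh\varphi+\varepsilon\varphi^*\cosh\varphi$, $\cosh(\varphi+\varepsilon\varphi^* )=\cosh\varphi+\varepsilon\varphi^*\sinh\varphi$. $ID_1^3$ is $ID^3$ with dual Lorentzian inner product $\langle \vec A,\vec B\rangle=\langle\vec a,\vec b\rangle+\varepsilon(\langle\vec a,\vec b^*\rangle+\langle\vec a^*,\vec b\rangle)$, $\langle\vec a,\vec b\rangle=-a_1b_1+a_2b_2+a_3b_3$. $\tilde\alpha$ is a dual timelike curve with dual arc length $s$, Frenet frame $\{T,N,B\}$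 ($T$ timelike, $N,B$ spacelike unit), $T'=\kappa N$, $N'=\kappa T+\tau B$, $B'=-\tau N$, dual curvature $\kappa$ and dual torsion $\tau$. $\tilde\beta$ is a dual spacelike curve with dual timelike binormal, arc length $s^*$, frame $\{V_1,V_2,V_3\}$ ($V_3$ timelike), $V_1'=PV_2$, $V_2'=-PV_1+QV_3$, $V_3'=QV_2$ (derivatives in $s^*$), dual curvature $P$ and dual torsion $Q$. A dual timelike - spacelike Mannheim pair means that under a correspondence $s\mapsto s^*$ the dual binormal line of $\tilde\alpha$ coincides with the dual principal normal line of $\tilde\beta$ at corresponding points, i.e. $\tilde\beta(s^* )=\tilde\alpha(s)+\lambda B(s)$. *)

From Stdlib Require Import Reals.
From Coquelicot Require Import Coquelicot.
Open Scope R_scope.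

(** Dual numbers a + eps b, eps^2 = 0. *)
Record dual := mkD { re : R ; du : R }.

Definition dual_add (x y : dual) : dual := mkD (re x + re y) (du x + du y).
Definition dual_opp (x : dual) : dual := mkD (- re x) (- du x).
Definition dual_sub (x y : dual) : dual := dual_add x (dual_opp y).
Definition dual_mul (x y : dual) : dual :=
  mkD (re x * re y) (re x * du y + du x * re y).
(** inverse, meaningful when re x <> 0: 1/(a + eps b) = 1/a - eps b/a^2 *)
Definition dual_inv (x : dual) : dual := mkD (/ re x) (- du x / (re x * re x)).
Definition dual_div (x y : dual) : dual := dual_mul x (dual_inv y).
Definition dual_const (r : R) : dual := mkD r 0.

(** extension of differentiable functions: f(a + eps b) = f a + eps b f`(a) *)
Definition dual_sinh (x : dual) : dual := mkD (sinh (re x)) (du x * cosh (re x)).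
Definition dual_cosh (x : dual) : dual := mkD (cosh (re x)) (du x * sinh (re x)).

Record dvec := mkV { v1 : dual ; v2 : dual ; v3 : dual }.

Definition Vadd (A B : dvec) : dvec :=
  mkV (dual_add (v1 A) (v1 B)) (dual_add (v2 A) (v2 B)) (dual_add (v3 A) (v3 B)).
Definition Vscale (c : dual) (A : dvec) : dvec :=
  mkV (dual_mul c (v1 A)) (dual_mul c (v2 A)) (dual_mul c (v3 A)).

Definition Lip (A B : dvec) : dual :=
  dual_add (dual_opp (dual_mul (v1 A) (v1 B))) (dual_add (dual_mul (v2 A) (v2 B)) (dual_mul (v3 A) (v3 B))).

Definition dual_deriv (f f' : R -> dual) : Prop :=
  forall t, is_derive (fun u => re (f u)) t (re (f' t))
         /\ is_derive (fun u => du (f u)) t (du (f' t)).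

Definition Vderiv (F F' : R -> dvec) : Prop :=
  dual_deriv (fun t => v1 (F t)) (fun t => v1 (F' t)) /\
  dual_deriv (fun t => v2 (F t)) (fun t => v2 (F' t)) /\
  dual_deriv (fun t => v3 (F t)) (fun t => v3 (F' t)).

Definition dual_0 : dual := dual_const 0.
Definition dual_1 : dual := dual_const 1.

Definition orthonormal_frame (E1 E2 E3 : dvec) (s1 s2 s3 : R) : Prop :=
  Lip E1 E1 = dual_const s1 /\ Lip E2 E2 = dual_const s2 /\ Lip E3 E3 = dual_const s3 /\
  Lip E1 E2 = dual_0 /\ Lip E1 E3 = dual_0 /\ Lip E2 E3 = dual_0.

(** Dual timelike curve alpha(t) with dual speed ds/dt = sp t and Frenet frame
    {T,N,B} (T timelike, N,B spacelike unit):
    alpha' = sp T, and with respect to dual arc length s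
    T' = k N, N' = k T + tau B, B' = - tau N  (d/ds = (1/sp) d/dt). *)
Definition timelike_Frenet (alpha : R -> dvec) (sp : R -> dual)
  (T N B : R -> dvec) (k tau : R -> dual) : Prop :=
  (forall t, 0 < re (sp t)) /\
  (forall t, orthonormal_frame (T t) (N t) (B t) (-1) 1 1) /\
  Vderiv alpha (fun t => Vscale (sp t) (T t)) /\
  Vderiv T (fun t => Vscale (dual_mul (sp t) (k t)) (N t)) /\
  Vderiv N (fun t => Vscale (sp t)
              (Vadd (Vscale (k t) (T t)) (Vscale (tau t) (B t)))) /\
  Vderiv B (fun t => Vscale (dual_mul (sp t) (dual_opp (tau t))) (N t)).

(** Dual spacelike curve beta(t) with dual timelike binormal, dual speed
    ds*/dt = sps t and frame {V1,V2,V3} (V3 timelike):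
    beta' = sps V1, and with respect to s*:
    V1' = P V2, V2' = -P V1 + Q V3, V3' = Q V2. *)
Definition spacelike_tb_Frenet (beta : R -> dvec) (sps : R -> dual)
  (V1 V2 V3 : R -> dvec) (P Q : R -> dual) : Prop :=
  (forall t, 0 < re (sps t)) /\
  (forall t, orthonormal_frame (V1 t) (V2 t) (V3 t) 1 1 (-1)) /\
  Vderiv beta (fun t => Vscale (sps t) (V1 t)) /\
  Vderiv V1 (fun t => Vscale (dual_mul (sps t) (P t)) (V2 t)) /\
  Vderiv V2 (fun t => Vscale (sps t)
              (Vadd (Vscale (dual_opp (P t)) (V1 t)) (Vscale (Q t) (V3 t)))) /\
  Vderiv V3 (fun t => Vscale (dual_mul (sps t) (Q t)) (V2 t)).

(** Dual timelike - spacelike Mannheim pair: at corresponding points (same t)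
    the binormal line of alpha coincides with the principal normal line of beta:
    beta = alpha + lambda B, and B = V2. *)
Definition Mannheim_pair (alpha beta : R -> dvec) (B V2 : R -> dvec)
  (lambda : R -> dual) : Prop :=
  forall t, beta t = Vadd (alpha t) (Vscale (lambda t) (B t)) /\ V2 t = B t.

(* Differentiate V1 = sinh Phi T + cosh Phi N and V3 = cosh Phi T + sinh Phi N
   with the Frenet formulas of alpha.  Both derivatives are combinations of
   T, N, B whose B-coefficients are cosh Phi ds/dt tau and sinh Phi ds/dt tau,
   and the T-coefficient of the first is cosh Phi (dPhi/dt + ds/dt kappa).  The
   Frenet formulas of beta say that these derivatives are P ds*/dt V2 and
   Q ds*/dt V2, with V2 = B by the Mannheim condition.  Comparing coordinates in
   the orthonormal frame {T, N, B} gives (i), (iii) and (iv); (ii) follows from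
   (iii), (iv) and cosh^2 - sinh^2 = 1. *)

From Stdlib Require Import Reals Lra FunctionalExtensionality.
From Coquelicot Require Import Coquelicot.
Open Scope R_scope.

Lemma dual_eq (x y : dual) : re x = re y -> du x = du y -> x = y.
Proof. destruct x, y; simpl; intros -> ->; reflexivity. Qed.

Lemma dual_ring_theory :
  ring_theory dual_0 dual_1 dual_add dual_mul dual_sub dual_opp (@eq dual).
Proof.
  constructor; intros; repeat match goal with d : dual |- _ => destruct d end;
    apply dual_eq; simpl; ring.
Qed.
Add Ring dual_ring : dual_ring_theory.

Lemma dual_mulI (a x y : dual) : re a <> 0 -> dual_mul a x = dual_mul a y -> x = y.
Proof.
  destruct a as [a a'], x as [x x'], y as [y y']; simpl; intros Ha E.
  injection E; intros Edu Ere.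
  assert (x = y) by (apply (Rmult_eq_reg_l a); auto); subst y.
  apply dual_eq; simpl; [reflexivity|].
  apply (Rmult_eq_reg_l a); auto; lra.
Qed.

Lemma dual_eq_div (a x y : dual) : re a <> 0 -> dual_mul a x = y -> x = dual_div y a.
Proof.
  intros Ha <-; destruct a, x; simpl in *; apply dual_eq; simpl; field; auto.
Qed.

Lemma dual_cosh2_sub_sinh2 (x : dual) :
  dual_sub (dual_mul (dual_cosh x) (dual_cosh x)) (dual_mul (dual_sinh x) (dual_sinh x))
  = dual_1.
Proof.
  destruct x as [a b]; apply dual_eq; simpl; [|ring].
  assert (exp a * exp (- a) = 1) by (rewrite <- exp_plus, Rplus_opp_r; apply exp_0).
  unfold cosh, sinh; nra.
Qed.

Lemma re_dual_cosh_neq0 (x : dual) : re (dual_cosh x) <> 0.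
Proof.
  simpl; unfold cosh; pose proof (exp_pos (re x)); pose proof (exp_pos (- re x)); lra.
Qed.

Lemma is_derive_eq (f : R -> R) x l l' : is_derive f x l -> l = l' -> is_derive f x l'.
Proof. intros H <-; exact H. Qed.

Lemma dual_deriv_unique f f1 f2 :
  dual_deriv f f1 -> dual_deriv f f2 -> forall t, f1 t = f2 t.
Proof.
  intros H G t; destruct (H t) as [H1 H2], (G t) as [G1 G2].
  apply dual_eq; eapply is_derive_unique in H1, H2, G1, G2; congruence.
Qed.

Lemma dual_deriv_ext f f' g' :
  dual_deriv f f' -> (forall t, f' t = g' t) -> dual_deriv f g'.
Proof. intros H E t; rewrite <- E; apply H. Qed.

Lemma dual_deriv_add f f' g g' : dual_deriv f f' -> dual_deriv g g' ->
  dual_deriv (fun t => dual_add (f t) (g t)) (fun t => dual_add (f' t) (g' t)).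
Proof.
  intros H G t; destruct (H t) as [H1 H2], (G t) as [G1 G2].
  split; simpl; [exact (is_derive_plus _ _ _ _ _ H1 G1) | exact (is_derive_plus _ _ _ _ _ H2 G2)].
Qed.

Lemma dual_deriv_mul f f' g g' : dual_deriv f f' -> dual_deriv g g' ->
  dual_deriv (fun t => dual_mul (f t) (g t))
    (fun t => dual_add (dual_mul (f' t) (g t)) (dual_mul (f t) (g' t))).
Proof.
  intros H G t; destruct (H t) as [H1 H2], (G t) as [G1 G2]; simpl; split.
  - exact (Derive.is_derive_mult _ _ _ _ _ H1 G1).
  - replace (re (f' t) * du (g t) + du (f' t) * re (g t)
             + (re (f t) * du (g' t) + du (f t) * re (g' t)))
      with ((re (f' t) * du (g t) + re (f t) * du (g' t))
            + (du (f' t) * re (g t) + du (f t) * re (g' t))) by ring.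
    exact (is_derive_plus _ _ _ _ _ (Derive.is_derive_mult _ _ _ _ _ H1 G2)
             (Derive.is_derive_mult _ _ _ _ _ H2 G1)).
Qed.

Lemma is_derive_sinh_comp (f : R -> R) x l :
  is_derive f x l -> is_derive (fun u => sinh (f u)) x (l * cosh (f x)).
Proof.
  exact (is_derive_comp sinh f x _ _ (proj2 (is_derive_Reals _ _ _) (derivable_pt_lim_sinh _))).
Qed.

Lemma is_derive_cosh_comp (f : R -> R) x l :
  is_derive f x l -> is_derive (fun u => cosh (f u)) x (l * sinh (f x)).
Proof.
  exact (is_derive_comp cosh f x _ _ (proj2 (is_derive_Reals _ _ _) (derivable_pt_lim_cosh _))).
Qed.

Lemma dual_deriv_sinh f f' : dual_deriv f f' ->
  dual_deriv (fun t => dual_sinh (f t)) (fun t => dual_mul (dual_cosh (f t)) (f' t)).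
Proof.
  intros H t; destruct (H t) as [H1 H2]; simpl; split.
  - eapply is_derive_eq; [exact (is_derive_sinh_comp _ _ _ H1) |]; simpl; ring.
  - eapply is_derive_eq;
      [exact (Derive.is_derive_mult _ _ _ _ _ H2 (is_derive_cosh_comp _ _ _ H1)) |];
      simpl; ring.
Qed.

Lemma dual_deriv_cosh f f' : dual_deriv f f' ->
  dual_deriv (fun t => dual_cosh (f t)) (fun t => dual_mul (dual_sinh (f t)) (f' t)).
Proof.
  intros H t; destruct (H t) as [H1 H2]; simpl; split.
  - eapply is_derive_eq; [exact (is_derive_cosh_comp _ _ _ H1) |]; simpl; ring.
  - eapply is_derive_eq;
      [exact (Derive.is_derive_mult _ _ _ _ _ H2 (is_derive_sinh_comp _ _ _ H1)) |];
      simpl; ring.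
Qed.

Lemma Vderiv_unique F G F' G' :
  (forall t, F t = G t) -> Vderiv F F' -> Vderiv G G' -> forall t, F' t = G' t.
Proof.
  intros EFG [H1 [H2 H3]] [G1 [G2 G3]] t.
  apply functional_extensionality in EFG; subst G.
  destruct (F' t) as [a1 a2 a3] eqn:E, (G' t) as [b1 b2 b3] eqn:E'; f_equal;
    [ pose proof (dual_deriv_unique _ _ _ H1 G1 t)
    | pose proof (dual_deriv_unique _ _ _ H2 G2 t)
    | pose proof (dual_deriv_unique _ _ _ H3 G3 t) ];
    simpl in *; rewrite E, E' in *; assumption.
Qed.

Lemma Vderiv_ext F F' G' : Vderiv F F' -> (forall t, F' t = G' t) -> Vderiv F G'.
Proof.
  intros [H1 [H2 H3]] E; refine (conj _ (conj _ _)); eapply dual_deriv_ext;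
    try eassumption; intro t; cbv beta; rewrite E; reflexivity.
Qed.

Lemma Vderiv_add F F' G G' : Vderiv F F' -> Vderiv G G' ->
  Vderiv (fun t => Vadd (F t) (G t)) (fun t => Vadd (F' t) (G' t)).
Proof.
  intros [H1 [H2 H3]] [G1 [G2 G3]];
    refine (conj _ (conj _ _)); apply dual_deriv_add; assumption.
Qed.

Lemma Vderiv_scale c c' F F' : dual_deriv c c' -> Vderiv F F' ->
  Vderiv (fun t => Vscale (c t) (F t))
    (fun t => Vadd (Vscale (c' t) (F t)) (Vscale (c t) (F' t))).
Proof.
  intros C [H1 [H2 H3]]; refine (conj _ (conj _ _)); apply dual_deriv_mul; assumption.
Qed.

Lemma Lip_addr A X Y : Lip A (Vadd X Y) = dual_add (Lip A X) (Lip A Y).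
Proof. destruct A, X, Y; unfold Lip; simpl; ring. Qed.

Lemma Lip_scaler A c X : Lip A (Vscale c X) = dual_mul c (Lip A X).
Proof. destruct A, X; unfold Lip; simpl; ring. Qed.

Lemma LipC A X : Lip A X = Lip X A.
Proof. destruct A, X; unfold Lip; simpl; ring. Qed.

Definition Vcomb (a b c : dual) (E1 E2 E3 : dvec) : dvec :=
  Vadd (Vscale a E1) (Vadd (Vscale b E2) (Vscale c E3)).

Lemma Vscale_Vcomb c E1 E2 E3 : Vscale c E3 = Vcomb dual_0 dual_0 c E1 E2 E3.
Proof. unfold Vcomb, Vadd, Vscale; cbn -[dual_add dual_mul]; f_equal; ring. Qed.

Lemma Lip_frame_Vcomb E1 E2 E3 s1 s2 s3 a b c :
  orthonormal_frame E1 E2 E3 s1 s2 s3 ->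
  Lip E1 (Vcomb a b c E1 E2 E3) = dual_mul (dual_const s1) a /\
  Lip E2 (Vcomb a b c E1 E2 E3) = dual_mul (dual_const s2) b /\
  Lip E3 (Vcomb a b c E1 E2 E3) = dual_mul (dual_const s3) c.
Proof.
  intros [H11 [H22 [H33 [H12 [H13 H23]]]]]; unfold Vcomb.
  rewrite !Lip_addr, !Lip_scaler, (LipC E2 E1), (LipC E3 E1), (LipC E3 E2),
    H11, H22, H33, H12, H13, H23.
  repeat split; ring.
Qed.

Lemma Vcomb_frame_inj E1 E2 E3 s1 s2 s3 a b c a' b' c' :
  orthonormal_frame E1 E2 E3 s1 s2 s3 -> s1 <> 0 -> s2 <> 0 -> s3 <> 0 ->
  Vcomb a b c E1 E2 E3 = Vcomb a' b' c' E1 E2 E3 -> a = a' /\ b = b' /\ c = c'.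
Proof.
  intros Hf Hs1 Hs2 Hs3 E.
  destruct (Lip_frame_Vcomb _ _ _ _ _ _ a b c Hf) as [La [Lb Lc]].
  destruct (Lip_frame_Vcomb _ _ _ _ _ _ a' b' c' Hf) as [La' [Lb' Lc']].
  rewrite E in La, Lb, Lc.
  repeat split; [ apply (dual_mulI (dual_const s1))
                | apply (dual_mulI (dual_const s2))
                | apply (dual_mulI (dual_const s3)) ]; try assumption; congruence.
Qed.

Lemma timelike_Frenet_deriv_TN alpha sp T N B k tau f f' g g' :
  timelike_Frenet alpha sp T N B k tau -> dual_deriv f f' -> dual_deriv g g' ->
  Vderiv (fun t => Vadd (Vscale (f t) (T t)) (Vscale (g t) (N t)))
    (fun t => Vcomb (dual_add (f' t) (dual_mul (g t) (dual_mul (sp t) (k t))))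
                    (dual_add (g' t) (dual_mul (f t) (dual_mul (sp t) (k t))))
                    (dual_mul (g t) (dual_mul (sp t) (tau t)))
                    (T t) (N t) (B t)).
Proof.
  intros [_ [_ [_ [HT [HN _]]]]] Hf Hg.
  eapply Vderiv_ext;
    [exact (Vderiv_add _ _ _ _ (Vderiv_scale _ _ _ _ Hf HT) (Vderiv_scale _ _ _ _ Hg HN))|].
  intro t; unfold Vcomb, Vadd, Vscale; cbn -[dual_add dual_mul]; f_equal; ring.
Qed.

Lemma Mannheim_coefficient_relations (ch sh dphi sp sps k tau P Q : dual) :
  re sp <> 0 -> re sps <> 0 -> re ch <> 0 ->
  dual_sub (dual_mul ch ch) (dual_mul sh sh) = dual_1 ->
  dual_add (dual_mul ch dphi) (dual_mul ch (dual_mul sp k)) = dual_0 ->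
  dual_mul ch (dual_mul sp tau) = dual_mul sps P ->
  dual_mul sh (dual_mul sp tau) = dual_mul sps Q ->
  k = dual_opp (dual_div dphi sp) /\
  tau = dual_sub (dual_mul (dual_mul P ch) (dual_div sps sp))
                 (dual_mul (dual_mul Q sh) (dual_div sps sp)) /\
  P = dual_mul (dual_mul tau ch) (dual_div sp sps) /\
  Q = dual_mul (dual_mul tau sh) (dual_div sp sps).
Proof.
  intros Hsp Hsps Hch Hhyp Hk HP HQ.
  assert (Ek : dual_mul sp k = dual_opp dphi).
  { apply (dual_mulI ch); [exact Hch|].
    transitivity (dual_sub (dual_add (dual_mul ch dphi) (dual_mul ch (dual_mul sp k)))
                           (dual_mul ch dphi)); [ring|].
    rewrite Hk; ring. }
  assert (Etau : dual_mul sp tau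
                 = dual_mul sps (dual_sub (dual_mul P ch) (dual_mul Q sh))).
  { transitivity (dual_mul (dual_mul sp tau)
                    (dual_sub (dual_mul ch ch) (dual_mul sh sh))); [rewrite Hhyp; ring|].
    transitivity (dual_sub (dual_mul ch (dual_mul ch (dual_mul sp tau)))
                           (dual_mul sh (dual_mul sh (dual_mul sp tau)))); [ring|].
    rewrite HP, HQ; ring. }
  apply (dual_eq_div _ _ _ Hsp) in Ek, Etau.
  symmetry in HP, HQ; apply (dual_eq_div _ _ _ Hsps) in HP, HQ.
  split; [rewrite Ek | split; [rewrite Etau at 1 | split; [rewrite HP | rewrite HQ]]];
    unfold dual_div; ring.
Qed.

Theorem theorem3p5
  (alpha beta : R -> dvec) (sp sps : R -> dual)
  (T N B V1 V2 V3 : R -> dvec) (k tau P Q lambda Phi dPhi : R -> dual) :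
  timelike_Frenet alpha sp T N B k tau ->
  spacelike_tb_Frenet beta sps V1 V2 V3 P Q ->
  Mannheim_pair alpha beta B V2 lambda ->
  dual_deriv Phi dPhi ->
  (forall t, V1 t = Vadd (Vscale (dual_sinh (Phi t)) (T t))
                         (Vscale (dual_cosh (Phi t)) (N t))) ->
  (forall t, V3 t = Vadd (Vscale (dual_cosh (Phi t)) (T t))
                         (Vscale (dual_sinh (Phi t)) (N t))) ->
  forall t,
    (* ds*/ds = sps/sp ;  ds/ds* = sp/sps ;  dPhi/ds = dPhi/dt / sp *)
    k t = dual_opp (dual_div (dPhi t) (sp t)) /\
    tau t = dual_sub (dual_mul (dual_mul (P t) (dual_cosh (Phi t))) (dual_div (sps t) (sp t)))
                 (dual_mul (dual_mul (Q t) (dual_sinh (Phi t))) (dual_div (sps t) (sp t))) /\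
    P t = dual_mul (dual_mul (tau t) (dual_cosh (Phi t))) (dual_div (sp t) (sps t)) /\
    Q t = dual_mul (dual_mul (tau t) (dual_sinh (Phi t))) (dual_div (sp t) (sps t)).
Proof.
  intros Halpha [Hsps [_ [_ [HdV1 [_ HdV3]]]]] HM HPhi HV1 HV3 t.
  pose proof Halpha as [Hsp [Hframe _]].
  assert (DV1 := Vderiv_unique _ _ _ _ (fun u => eq_sym (HV1 u)) (timelike_Frenet_deriv_TN
                   _ _ _ _ _ _ _ _ _ _ _ Halpha (dual_deriv_sinh _ _ HPhi)
                   (dual_deriv_cosh _ _ HPhi)) HdV1 t).
  assert (DV3 := Vderiv_unique _ _ _ _ (fun u => eq_sym (HV3 u)) (timelike_Frenet_deriv_TN
                   _ _ _ _ _ _ _ _ _ _ _ Halpha (dual_deriv_cosh _ _ HPhi)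
                   (dual_deriv_sinh _ _ HPhi)) HdV3 t).
  cbv beta in DV1, DV3.
  rewrite (proj2 (HM t)), (Vscale_Vcomb _ (T t) (N t)) in DV1.
  rewrite (proj2 (HM t)), (Vscale_Vcomb _ (T t) (N t)) in DV3.
  apply (Vcomb_frame_inj _ _ _ _ _ _ _ _ _ _ _ _ (Hframe t)) in DV1 as [Ek [_ EP]],
    DV3 as [_ [_ EQ]]; try lra.
  apply Mannheim_coefficient_relations; auto using re_dual_cosh_neq0, dual_cosh2_sub_sinh2;
    [specialize (Hsp t) | specialize (Hsps t)]; lra.
Qed.
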